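(* Let $n\ge 2$. The center $Z(Q_n)$ of $Q_n$ equals $\mathbb{C}\cdot 1$ if $3\nmid n$, and if $3\mid n$ it is $4$-dimensional with basis $1,U,V,UV$, where $U=\prod_{1\le i\le n-1,\,3\nmid i}u_i$ and $V=\prod_{1\le i\le n-1,\,3\nmid i}v_i$.
   Context: $Q_n$ is the $\mathbb{C}$-algebra with generators $u_1,v_1,\dots,u_{n-1},v_{n-1}$ and relations (G1) $u_i^2=v_i^2=-1$; (G2) $[u_i,v_j]=-1$ if $|i-j|\le1$ (including $i=j$); (G3) $[u_i,v_j]=1$ if $|i-j|\ge2$; (G4) $[u_i,u_j]=[v_i,v_j]=1$, with $[a,b]=aba^{-1}b^{-1}$. *)

From HB Require Import structures.
From mathcomp Require Import all_boot all_order all_algebra.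
Set Implicit Arguments. Unset Strict Implicit. Unset Printing Implicit Defensive.
Import Order.TTheory GRing.Theory Num.Theory.
Local Open Scope ring_scope.

Definition inQ (n i : nat) : bool := (1 <= i < n)%N.

(* Since u_i^2 = v_i^2 = -1, all generators are invertible, and
   [a,b] = a b a^-1 b^-1 = c  (c = +-1 central)  is written  a b = c (b a). *)
Definition Qrel (R : pzRingType) (n : nat) (u v : nat -> R) : Prop :=
  [/\ forall i, inQ n i -> u i * u i = -1 /\ v i * v i = -1,
      forall i j, inQ n i -> inQ n j ->
          u i * v j = (if (i <= j.+1)%N && (j <= i.+1)%N then - (v j * u i)
                       else v j * u i)
    & forall i j, inQ n i -> inQ n j ->
          u i * u j = u j * u i /\ v i * v j = v j * v i].

(* (A, u, v) is the C-algebra Q_n presented by generators u_i, v_i and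
   relations (G1)-(G4): it satisfies the relations and is universal
   (initial) among C-algebras with such elements. *)
Definition is_Qn (C : fieldType) (n : nat) (A : algType C) (u v : nat -> A) : Prop :=
  Qrel n u v /\
  forall (B : algType C) (x y : nat -> B), Qrel n x y ->
    (exists f : {lrmorphism A -> B},
        forall i, inQ n i -> f (u i) = x i /\ f (v i) = y i) /\
    (forall f g : {lrmorphism A -> B},
        (forall i, inQ n i -> f (u i) = g (u i) /\ f (v i) = g (v i)) ->
        f =1 g).

Definition central (R : pzRingType) (z : R) : Prop := forall a : R, z * a = a * z.

Definition Uprod (R : pzRingType) (n : nat) (u : nat -> R) : R :=
  \prod_(1 <= i < n | ~~ (3 %| i)%N) u i.

(* Every element of Q_n is a linear combination of the monomials
   u^a v^b = (prod_(i in a) u_i) (prod_(i in b) v_i) with a, b subsets of {1, ..., n-1}: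
   their span contains 1 and is stable under left multiplication by the generators, hence
   is everything by the universal property.  The monomial u^a v^b commutes or anticommutes
   with u_i (resp. v_i) according to the parity of |b /\ {i-1, i, i+1}| (resp. of a).
   As 2 is invertible, averaging a central element over conjugation by a generator removes
   the monomials anticommuting with it.  For the surviving index sets the indicator obeys
   a_(i+1) = a_(i-1) + a_i over F_2 with a_0 = a_n = 0, so a is empty or {i | 3 does not
   divide i}, the latter only when 3 | n; this leaves 1, U, V and UV.  These are
   independent: the automorphisms negating u_1 or v_1 separate them into distinct joint
   eigenspaces, and none of them is zero since U and V are products of invertible elements
   and Q_n is nonzero, as its regular representation on the monomials shows. *)

From HB Require Import structures.
From mathcomp Require Import all_boot all_order all_algebra.
From mathcomp Require Import boolp zify.
Set Implicit Arguments. Unset Strict Implicit. Unset Printing Implicit Defensive.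
Import Order.TTheory GRing.Theory Num.Theory.

Local Notation mask n := {ffun 'I_n -> bool}.

Lemma ndvd3_recurrence k : ~~ (3 %| k.+2) = ~~ (3 %| k) (+) ~~ (3 %| k.+1).
Proof.
rewrite /dvdn (divn_eq k 3) -!addnS !modnMDl.
by case: (k %% 3) (@ltn_pmod k 3 isT) => [|[|[|]]].
Qed.

Lemma addb_recurrence_period3 (f : nat -> bool) m :
  f 0 = false -> (forall i, 0 < i < m -> f i.+1 = f i.-1 (+) f i) ->
  forall k, k <= m -> f k = f 1 && ~~ (3 %| k).
Proof.
move=> f0 fS.
have pair k : k < m -> f k = f 1 && ~~ (3 %| k) /\ f k.+1 = f 1 && ~~ (3 %| k.+1).
  elim: k => [|k IH] km; first by rewrite f0 andbF andbT.
  have [fk fk1] := IH (ltnW km); split=> //.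
  by rewrite fS //= fk fk1 ndvd3_recurrence; case: (f 1).
by case=> [|k] km; [rewrite f0 andbF | case: (pair k km)].
Qed.

Section Masks.

Variable n : nat.

(* Component [0] of a mask is junk: [mask_at] only sees the generator indices [1 <= k < n]. *)
Definition mask_at (a : mask n) (k : nat) : bool :=
  if insub k is Some i then (0 < k) && a i else false.

Definition toggle (a : mask n) (j : nat) : mask n := [ffun i => a i (+) (val i == j)].

Definition nbr_odd (a : mask n) (i : nat) : bool :=
  mask_at a i.-1 (+) mask_at a i (+) mask_at a i.+1.

Definition adjacent (i j : nat) : bool := (i <= j.+1) && (j <= i.+1).

Implicit Types (a : mask n) (i j k : nat).

Lemma mask_at_inQ a k : mask_at a k -> inQ n k.
Proof. by rewrite /mask_at; case: insubP => // i kn _ /andP[k_gt0 _]; rewrite /inQ k_gt0. Qed.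

Lemma mask_at0 k : mask_at [ffun=> false] k = false.
Proof. by rewrite /mask_at; case: insubP => // i _ _; rewrite ffunE andbF. Qed.

Lemma mask_at_toggle a j k : inQ n j ->
  mask_at (toggle a j) k = mask_at a k (+) (k == j).
Proof.
case/andP=> j_gt0 jn; rewrite /mask_at; case: insubP => [i _ ik|].
  by rewrite ffunE ik; case: eqP => [->|]; rewrite ?j_gt0 ?addbF.
by case: eqP => // ->; rewrite jn.
Qed.

Lemma toggleK a j : toggle (toggle a j) j = a.
Proof. by apply/ffunP=> i; rewrite !ffunE addbK. Qed.

Lemma toggleC a i j : toggle (toggle a i) j = toggle (toggle a j) i.
Proof. by apply/ffunP=> k; rewrite !ffunE addbAC. Qed.

Lemma adjacentC i j : adjacent i j = adjacent j i.
Proof. by rewrite /adjacent andbC. Qed.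

Lemma adjacentE i j : 0 < i ->
  adjacent i j = (j == i.-1) (+) (j == i) (+) (j == i.+1).
Proof.
rewrite /adjacent => i_gt0.
by do 3 case: eqP => ? /=; apply/idP/idP; lia.
Qed.

Lemma nbr_odd_toggle a i j : inQ n i -> inQ n j ->
  nbr_odd (toggle a j) i = nbr_odd a i (+) adjacent i j.
Proof.
move=> /andP[i_gt0 _] jQ; rewrite /nbr_odd !mask_at_toggle // adjacentE //.
by rewrite !(eq_sym j); do 3 case: (mask_at _ _); do 3 case: (_ == j).
Qed.

Lemma xor_adjacent_nbr_odd a i : 0 < i ->
  \big[addb/false]_(1 <= j < n | mask_at a j) adjacent i j = nbr_odd a i.
Proof.
move=> i_gt0.
have pick k : \big[addb/false]_(1 <= j < n) ((j == k) && mask_at a j) = mask_at a k.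
  case ak: (mask_at a k); last by rewrite big1 // => j _; case: eqP => // ->.
  have kQ := mask_at_inQ ak.
  rewrite (bigD1_seq k) ?mem_index_iota ?iota_uniq //= ak andbT big1 ?addbF.
    exact: eqxx.
  by move=> j /negbTE->.
rewrite /nbr_odd big_mkcond /= -!pick -!big_split /=; apply: eq_bigr => j _.
by rewrite adjacentE //; case: (mask_at a j); rewrite ?andbT ?andbF.
Qed.

Definition nbr_even (a : mask n) : bool := all (fun i => ~~ nbr_odd a i) (index_iota 1 n).

Lemma nbr_even_mask_at a : nbr_even a ->
  (forall k, inQ n k -> mask_at a k = mask_at a 1 && ~~ (3 %| k)) /\
  (mask_at a 1 -> 3 %| n).
Proof.
move=> /allP even.
have out k : ~~ inQ n k -> mask_at a k = false by apply: contraNF; apply: mask_at_inQ.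
have period := @addb_recurrence_period3 (mask_at a) n (out 0 isT).
have {}period : forall k, k <= n -> mask_at a k = mask_at a 1 && ~~ (3 %| k).
  apply: period => i iQ; have := even i; rewrite mem_index_iota => /(_ iQ).
  by rewrite /nbr_odd; case: (mask_at a i.+1); case: (mask_at a i.-1); case: (mask_at a i).
split=> [k /andP[_ /ltnW]|a1]; first exact: period.
by apply: contraTT a1 => n3; rewrite -(andbT (mask_at a 1)) -n3 -period ?out /inQ ?ltnn ?andbF.
Qed.

Definition maskU : mask n := [ffun i : 'I_n => ~~ (3 %| i)].

Lemma mask_atU k : mask_at maskU k = (k < n) && ~~ (3 %| k).
Proof.
rewrite /mask_at; case: insubP => [i kn ik|/negbTE->//]; rewrite ffunE ik kn.
by case: k ik {kn} => [|k] //=; rewrite dvdn0.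
Qed.

Lemma nbr_even_maskU : 3 %| n -> nbr_even maskU.
Proof.
move=> n3; have atU k : k <= n -> mask_at maskU k = ~~ (3 %| k).
  by rewrite mask_atU leq_eqVlt => /predU1P[->|->]; rewrite ?ltnn ?n3.
apply/allP => -[|i]; rewrite mem_index_iota // => /andP[_ lt_in].
by rewrite /nbr_odd /= !atU ?(ltnW lt_in) ?(ltnW (ltnW lt_in)) // ndvd3_recurrence addbb.
Qed.

End Masks.

Local Open Scope ring_scope.

Lemma mulr_signCA (R : pzRingType) b (x y : R) :
  x * ((-1) ^+ b * y) = (-1) ^+ b * (x * y).
Proof. by rewrite mulrA (commr_sign x b) mulrA. Qed.

Lemma commr_prod_sign (R : pzRingType) (I : Type) (r : seq I) (P : pred I)
    (F : I -> R) (s : I -> bool) (x : R) :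
  (forall j, P j -> x * F j = (-1) ^+ s j * (F j * x)) ->
  x * \prod_(j <- r | P j) F j
  = (-1) ^+ (\big[addb/false]_(j <- r | P j) s j) * (\prod_(j <- r | P j) F j * x).
Proof.
move=> xF; elim: r => [|j r IH]; first by rewrite !big_nil mul1r mulr1 mul1r.
rewrite !big_cons; case: ifP => // Pj.
by rewrite mulrA xF // -!mulrA IH mulr_signCA signr_addb -mulrA.
Qed.

Lemma commr_scale (C : pzRingType) (A : algType C) (k : C) (x y : A) :
  GRing.comm x y -> GRing.comm x (k *: y).
Proof. by move=> xy; rewrite /GRing.comm -scalerAr xy scalerAl. Qed.

Definition mask_prod (R : pzRingType) n (w : nat -> R) (a : mask n) : R :=
  \prod_(1 <= i < n | mask_at a i) w i.

Definition monomial (R : pzRingType) n (u v : nat -> R) (t : mask n * mask n) : R :=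
  mask_prod u t.1 * mask_prod v t.2.

Section CommutingSquareRoots.

Variables (R : pzRingType) (n : nat) (w : nat -> R).
Hypothesis wC : forall i j, inQ n i -> inQ n j -> GRing.comm (w i) (w j).
Hypothesis wsq : forall i, inQ n i -> w i * w i = -1.
Implicit Types a : mask n.

Lemma mask_prod_toggle_out a i : inQ n i -> ~~ mask_at a i ->
  mask_prod w (toggle a i) = w i * mask_prod w a.
Proof.
move=> iQ ai; have /andP[i_gt0 lt_in] := iQ.
rewrite /mask_prod !(big_cat_nat i_gt0 (ltnW lt_in)) /=.
rewrite !(big_ltn_cond lt_in) mask_at_toggle // eqxx (negbTE ai) /=.
have same m p : (i < m)%N || (p <= i)%N ->
    \prod_(m <= j < p | mask_at (toggle a i) j) w j
    = \prod_(m <= j < p | mask_at a j) w j.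
  move=> out; apply: congr_big_nat => // j /andP[mj jp].
  by rewrite mask_at_toggle // (_ : j == i = false) ?addbF //; apply/negbTE; lia.
rewrite same ?leqnn ?orbT // same ?ltnSn //.
by rewrite mulrA -(commr_prod _ (fun j aj => wC iQ (mask_at_inQ aj))) -mulrA.
Qed.

Lemma mask_prod_toggle a i : inQ n i ->
  w i * mask_prod w a = (-1) ^+ mask_at a i * mask_prod w (toggle a i).
Proof.
move=> iQ; case ai: (mask_at a i); last by rewrite mask_prod_toggle_out ?ai // mul1r.
have ->: mask_prod w a = w i * mask_prod w (toggle a i).
  by rewrite -mask_prod_toggle_out ?toggleK // mask_at_toggle // ai eqxx.
by rewrite mulrA wsq // expr1 mulN1r.
Qed.

End CommutingSquareRoots.

Section QnRelations.

Variables (R : pzRingType) (n : nat) (u v : nat -> R).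
Hypothesis Q : Qrel n u v.
Implicit Types (a b : mask n) (t : mask n * mask n).

Lemma Qrel_usq i : inQ n i -> u i * u i = -1.
Proof. by case: Q => sq _ _ /sq[]. Qed.

Lemma Qrel_vsq i : inQ n i -> v i * v i = -1.
Proof. by case: Q => sq _ _ /sq[]. Qed.

Lemma Qrel_uC i j : inQ n i -> inQ n j -> GRing.comm (u i) (u j).
Proof. by case: Q => _ _ C iQ jQ; case: (C i j iQ jQ). Qed.

Lemma Qrel_vC i j : inQ n i -> inQ n j -> GRing.comm (v i) (v j).
Proof. by case: Q => _ _ C iQ jQ; case: (C i j iQ jQ). Qed.

Lemma Qrel_uv i j : inQ n i -> inQ n j ->
  u i * v j = (-1) ^+ adjacent i j * (v j * u i).
Proof.
by case: Q => _ uv _ iQ jQ; rewrite uv // /adjacent; case: ifP; rewrite ?mulN1r ?mul1r.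
Qed.

Lemma Qrel_vu i j : inQ n i -> inQ n j ->
  v i * u j = (-1) ^+ adjacent i j * (u j * v i).
Proof. by move=> iQ jQ; rewrite adjacentC Qrel_uv // mulrA -signr_addb addbb mul1r. Qed.

Lemma u_mask_prod_v i b : inQ n i ->
  u i * mask_prod v b = (-1) ^+ nbr_odd b i * (mask_prod v b * u i).
Proof.
move=> iQ; rewrite /mask_prod (commr_prod_sign _ (s := adjacent i)) ?xor_adjacent_nbr_odd //.
  by case/andP: iQ.
by move=> j /mask_at_inQ jQ; apply: Qrel_uv.
Qed.

Lemma v_mask_prod_u i a : inQ n i ->
  v i * mask_prod u a = (-1) ^+ nbr_odd a i * (mask_prod u a * v i).
Proof.
move=> iQ; rewrite /mask_prod (commr_prod_sign _ (s := adjacent i)) ?xor_adjacent_nbr_odd //.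
  by case/andP: iQ.
by move=> j /mask_at_inQ jQ; apply: Qrel_vu.
Qed.

Lemma mulu_monomial i a b : inQ n i ->
  u i * monomial u v (a, b) = (-1) ^+ mask_at a i * monomial u v (toggle a i, b).
Proof.
by move=> iQ; rewrite /monomial /= mulrA (mask_prod_toggle Qrel_uC Qrel_usq) // -mulrA.
Qed.

Lemma mulv_monomial i a b : inQ n i ->
  v i * monomial u v (a, b)
  = (-1) ^+ (nbr_odd a i (+) mask_at b i) * monomial u v (a, toggle b i).
Proof.
move=> iQ; rewrite /monomial /= mulrA v_mask_prod_u // -!mulrA.
by rewrite (mask_prod_toggle Qrel_vC Qrel_vsq) // mulr_signCA mulrA -signr_addb.
Qed.

Lemma u_monomial_comm i : inQ n i ->
  forall t, u i * monomial u v t = (-1) ^+ nbr_odd t.2 i * (monomial u v t * u i).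
Proof.
move=> iQ t; rewrite /monomial mulrA (commr_prod _ (fun j aj => Qrel_uC iQ (mask_at_inQ aj))).
by rewrite -mulrA u_mask_prod_v // mulr_signCA !mulrA.
Qed.

Lemma v_monomial_comm i : inQ n i ->
  forall t, v i * monomial u v t = (-1) ^+ nbr_odd t.1 i * (monomial u v t * v i).
Proof.
move=> iQ t; rewrite /monomial mulrA v_mask_prod_u // -!mulrA.
by rewrite (commr_prod _ (fun j aj => Qrel_vC iQ (mask_at_inQ aj))).
Qed.

End QnRelations.

Section Span.

Variables (C : pzRingType) (A : lmodType C) (T : finType) (m : T -> A).

Definition in_span (x : A) : Prop := exists c : T -> C, x = \sum_t c t *: m t.

Lemma in_span0 : in_span 0.
Proof. by exists (fun=> 0); rewrite big1 // => t _; rewrite scale0r. Qed.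

Lemma in_spanD x y : in_span x -> in_span y -> in_span (x + y).
Proof.
move=> [c ->] [d ->]; exists (fun t => c t + d t).
by rewrite -big_split; apply: eq_bigr => t _; rewrite scalerDl.
Qed.

Lemma in_spanZ k x : in_span x -> in_span (k *: x).
Proof.
move=> [c ->]; exists (fun t => k * c t).
by rewrite scaler_sumr; apply: eq_bigr => t _; rewrite scalerA.
Qed.

Lemma in_span_sum (I : Type) (r : seq I) (P : pred I) (F : I -> A) :
  (forall i, P i -> in_span (F i)) -> in_span (\sum_(i <- r | P i) F i).
Proof. by move=> FP; apply: big_ind => //; [apply: in_span0 | apply: in_spanD]. Qed.

Lemma in_span_gen t : in_span (m t).
Proof.
exists (fun s => (s == t)%:R); rewrite (bigD1 t) //= eqxx scale1r big1 ?addr0 //.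
by move=> s /negbTE->; rewrite scale0r.
Qed.

End Span.

Definition idealizer (C : fieldType) (A : algType C) (T : finType) (m : T -> A) : {pred A} :=
  fun x => `[< forall y, in_span m y -> in_span m (x * y) >].

Lemma idealizer_closed (C : fieldType) (A : algType C) (T : finType) (m : T -> A) :
  GRing.subsemialg_closed (idealizer m).
Proof.
split.
- by apply/asboolP => y; rewrite mul1r.
- split; first by apply/asboolP => y _; rewrite mul0r; apply: in_span0.
  move=> x z /asboolP xI /asboolP zI; apply/asboolP => y yS.
  by rewrite mulrDl; apply: in_spanD; [apply: xI | apply: zI].
- by move=> k x /asboolP xI; apply/asboolP => y yS; rewrite -scalerAl; apply/in_spanZ/xI.
- move=> x z /asboolP xI /asboolP zI; apply/asboolP => y yS.
  by rewrite -mulrA; apply/xI/zI.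
Qed.

HB.instance Definition _ (C : fieldType) (A : algType C) (T : finType) (m : T -> A) :=
  GRing.isSubalgClosed.Build C A (idealizer m) (idealizer_closed m).

Definition subalg_of (C : fieldType) (A : algType C) (S : subalgClosed A) := {x : A | x \in S}.

HB.instance Definition _ (C : fieldType) (A : algType C) (S : subalgClosed A) :=
  [isSub for (@sval A _ : subalg_of S -> A)].
HB.instance Definition _ (C : fieldType) (A : algType C) (S : subalgClosed A) :=
  [Choice of subalg_of S by <:].
HB.instance Definition _ (C : fieldType) (A : algType C) (S : subalgClosed A) :=
  [SubChoice_isSubAlgebra of subalg_of S by <:].

Definition subalg_val_comp (C : fieldType) (A : algType C) (S : subalgClosed A)
  (h : {lrmorphism A -> subalg_of S}) : A -> A := val \o h.

HB.instance Definition _ (C : fieldType) (A : algType C) (S : subalgClosed A)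
    (h : {lrmorphism A -> subalg_of S}) :=
  GRing.RMorphism.copy (subalg_val_comp h) (val \o h).
HB.instance Definition _ (C : fieldType) (A : algType C) (S : subalgClosed A)
    (h : {lrmorphism A -> subalg_of S}) :=
  GRing.Linear.copy (subalg_val_comp h) (val \o h).

Lemma Qrel_inj_rmorph (R S : pzRingType) (f : {rmorphism R -> S}) n (x y : nat -> R)
    (u v : nat -> S) :
  injective f -> (forall i, inQ n i -> f (x i) = u i /\ f (y i) = v i) ->
  Qrel n u v -> Qrel n x y.
Proof.
move=> inj_f fxy [sq uv comm]; split=> [i iQ|i j iQ jQ|i j iQ jQ].
- have [fx fy] := fxy i iQ; have [usq vsq] := sq i iQ.
  by split; apply: inj_f; rewrite rmorphM rmorphN1 ?fx ?fy.
- have [fx _] := fxy i iQ; have [_ fy] := fxy j jQ.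
  by apply: inj_f; rewrite fun_if rmorphN !rmorphM fx fy uv.
- have [fxi fyi] := fxy i iQ; have [fxj fyj] := fxy j jQ; have [uC vC] := comm i j iQ jQ.
  by split; apply: inj_f; rewrite !rmorphM ?fxi ?fxj ?fyi ?fyj.
Qed.

Section Generation.

Variables (C : fieldType) (n : nat) (A : algType C) (u v : nat -> A).
Hypothesis QA : is_Qn n u v.

Lemma is_Qn_subalg (S : subalgClosed A) :
  (forall i, inQ n i -> u i \in S /\ v i \in S) -> forall x, x \in S.
Proof.
move=> uvS; have [Q univ] := QA.
pose x i : subalg_of S := insubd 1 (u i).
pose y i : subalg_of S := insubd 1 (v i).
have Qxy : Qrel n x y.
  apply: (Qrel_inj_rmorph (f := val : {rmorphism subalg_of S -> A})) Q; first exact: val_inj.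
  by move=> i iQ; have [uS vS] := uvS i iQ; rewrite /= !insubdK.
have [[h hxy] _] := univ _ x y Qxy.
move=> z; rewrite [z](proj2 (univ A u v Q) idfun (subalg_val_comp h)); first exact: valP.
move=> i iQ; have [hu hv] := hxy i iQ; have [uS vS] := uvS i iQ.
by split; rewrite /= /subalg_val_comp /= ?hu ?hv insubdK.
Qed.

Lemma is_Qn_span (T : finType) (m : T -> A) :
  in_span m 1 ->
  (forall i y, inQ n i -> in_span m y -> in_span m (u i * y) /\ in_span m (v i * y)) ->
  forall x, in_span m x.
Proof.
move=> span1 gen_span x; rewrite -[x]mulr1.
have /asboolP: x \in idealizer m; last by apply.
apply: is_Qn_subalg => i iQ.
by split; apply/asboolP => y yS; have [] := gen_span i y iQ yS.
Qed.

End Generation.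

Lemma mask_prod_nbr_even (R : pzRingType) n (w : nat -> R) (a : mask n) :
  nbr_even a -> mask_prod w a = if mask_at a 1 then Uprod n w else 1.
Proof.
move=> /nbr_even_mask_at[at_a _]; rewrite /mask_prod /Uprod.
transitivity (\prod_(1 <= k < n | mask_at a 1 && ~~ (3 %| k)%N) w k).
  by apply: congr_big_nat => // k /at_a.
by case: (mask_at a 1); last rewrite big_pred0.
Qed.

Lemma mask_prod_maskU (R : pzRingType) n (w : nat -> R) : mask_prod w (maskU n) = Uprod n w.
Proof. by apply: congr_big_nat => // k /andP[_ kn]; rewrite mask_atU kn. Qed.

(* [z - g z g = 2 z], while [m t - g (m t) g] is [0] or [2 (m t)] according to [s t]. *)
Lemma span_comm_anticomm0 (C : fieldType) (A : algType C) (T : finType) (m : T -> A)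
    (s : T -> bool) (g z : A) (c : T -> C) :
  2%:R != 0 :> C -> g * g = -1 -> (forall t, g * m t = (-1) ^+ s t * (m t * g)) ->
  GRing.comm g z -> z = \sum_t c t *: m t -> z = \sum_t (if s t then 0 else c t) *: m t.
Proof.
move=> two gsq gm gz Ez; apply: (scalerI two).
have ->: 2%:R *: z = z - g * z * g by rewrite gz -mulrA gsq mulrN1 opprK scaler_nat mulr2n.
rewrite {1 2}Ez mulr_sumr mulr_suml -sumrB scaler_sumr; apply: eq_bigr => t _.
rewrite -scalerAr -scalerAl gm -!mulrA gsq mulrN1 mulrN scalerN.
rewrite opprK; case: (s t); rewrite /= ?expr1 ?expr0 ?mulN1r ?mul1r.
  by rewrite scalerN subrr scale0r scaler0.
by rewrite scaler_nat mulr2n.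
Qed.

Section Center.

Variables (C : fieldType) (n : nat) (A : algType C) (u v : nat -> A).
Hypothesis QA : is_Qn n u v.

Let Q : Qrel n u v := QA.1.
Local Notation m := (monomial (n := n) u v).

Lemma monomial_span x : in_span m x.
Proof.
apply: (is_Qn_span QA) => [|i y iQ [c ->]].
  have <-: m ([ffun=> false], [ffun=> false]) = 1.
    by rewrite /monomial /mask_prod !big_pred0 ?mulr1 // => j; rewrite mask_at0.
  exact: in_span_gen.
rewrite !mulr_sumr; split; apply: in_span_sum => -[a b] _; rewrite -scalerAr.
  by rewrite mulu_monomial // mulr_sign -scaler_sign; apply/in_spanZ/in_spanZ/in_span_gen.
by rewrite mulv_monomial // mulr_sign -scaler_sign; apply/in_spanZ/in_spanZ/in_span_gen.
Qed.

Lemma central_gens w :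
  (forall i, inQ n i -> GRing.comm w (u i) /\ GRing.comm w (v i)) -> central w.
Proof.
move=> wuv x; have [c ->] := monomial_span x.
apply: commr_sum => t _; apply/commr_scale/commrM; apply: commr_prod => i /mask_at_inQ iQ.
  by case: (wuv i iQ).
by case: (wuv i iQ).
Qed.

Lemma central_Uprod : (3 %| n)%N -> central (Uprod n u) /\ central (Uprod n v).
Proof.
move=> n3; have /allP even := nbr_even_maskU n3.
have nbrU i : inQ n i -> nbr_odd (maskU n) i = false.
  by move=> iQ; apply/negbTE/even; rewrite mem_index_iota.
rewrite -!(mask_prod_maskU n); split; apply: central_gens => i iQ; split.
- by apply/commr_sym/commr_prod => j /mask_at_inQ /(Qrel_uC Q iQ).
- by apply/commr_sym; rewrite /GRing.comm (v_mask_prod_u Q) // nbrU // mul1r.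
- by apply/commr_sym; rewrite /GRing.comm (u_mask_prod_v Q) // nbrU // mul1r.
- by apply/commr_sym/commr_prod => j /mask_at_inQ /(Qrel_vC Q iQ).
Qed.

Hypothesis two : 2%:R != 0 :> C.

Lemma central_monomial_span z : central z ->
  exists c : mask n * mask n -> C,
    z = \sum_t c t *: m t /\ forall t, c t != 0 -> nbr_even t.1 && nbr_even t.2.
Proof.
move=> cz; have [c Ez] := monomial_span z.
pose even_on r (t : mask n * mask n) := all (fun i => ~~ nbr_odd t.1 i && ~~ nbr_odd t.2 i) r.
suff Er r : all (inQ n) r -> z = \sum_t (if even_on r t then c t else 0) *: m t.
  exists (fun t => if nbr_even t.1 && nbr_even t.2 then c t else 0); split.
    by rewrite (Er (index_iota 1 n)); [apply: eq_bigr => t _; rewrite /even_on all_predI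
      | apply/allP => i; rewrite mem_index_iota].
  by move=> t; case: ifP => //; rewrite eqxx.
elim: r => [_|i r IH /andP[iQ rQ]]; first by rewrite Ez.
have zC g : GRing.comm g z := commr_sym (cz g).
rewrite (span_comm_anticomm0 two (Qrel_usq Q iQ) (u_monomial_comm Q iQ) (zC _)
         (span_comm_anticomm0 two (Qrel_vsq Q iQ) (v_monomial_comm Q iQ) (zC _) (IH rQ))).
by apply: eq_bigr => t _; rewrite /even_on /=; case: nbr_odd; case: nbr_odd.
Qed.

Lemma central_scalar (z : A) : ~~ (3 %| n)%N -> central z -> exists k : C, z = k%:A.
Proof.
move=> n3 /central_monomial_span[c [-> c_even]]; exists (\sum_t c t).
rewrite scaler_suml; apply: eq_bigr => t _.
have [-> | /c_even /andP[e1 e2]] := eqVneq (c t) 0; first by rewrite !scale0r.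
have at1 (a : mask n) : nbr_even a -> mask_at a 1 = false.
  by move=> /nbr_even_mask_at[_ /contraNF/(_ n3)].
by rewrite /monomial !mask_prod_nbr_even // !at1 // mulr1.
Qed.

Lemma central_span_1UV (z : A) : central z -> exists a b c d : C,
  z = a%:A + b *: Uprod n u + c *: Uprod n v + d *: (Uprod n u * Uprod n v).
Proof.
move=> /central_monomial_span[k [-> k_even]].
pose coef p q := \sum_t (if (mask_at t.1 1 == p) && (mask_at t.2 1 == q) then k t else 0).
exists (coef false false), (coef true false), (coef false true), (coef true true).
rewrite !scaler_suml -!big_split /=; apply: eq_bigr => t _.
have [-> | /k_even /andP[e1 e2]] := eqVneq (k t) 0; first by rewrite !if_same !scale0r !addr0.
rewrite /monomial !mask_prod_nbr_even //.
case: (mask_at t.1 1); case: (mask_at t.2 1);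
  by rewrite /= !scale0r ?add0r ?addr0 ?mul1r ?mulr1.
Qed.

End Center.

Section SignedPermutationMatrices.

Variables (R : nzRingType) (T : finType) (t0 : T).

Let T_gt0 : (0 < #|T|)%N. Proof. by apply/card_gt0P; exists t0. Qed.

Let elem (i : 'I_#|T|.-1.+1) : T := enum_val (cast_ord (prednK T_gt0) i).
Let index (t : T) : 'I_#|T|.-1.+1 := cast_ord (esym (prednK T_gt0)) (enum_rank t).

Let indexK : cancel index elem.
Proof. by move=> t; rewrite /elem /index cast_ordKV enum_rankK. Qed.

Let elemK : cancel elem index.
Proof. by move=> i; rewrite /elem /index enum_valK cast_ordK. Qed.

Let elem_inj : injective elem.
Proof. exact: can_inj elemK. Qed.

Definition sperm_mx (p : T -> T) (b : T -> bool) : 'M[R]_#|T|.-1.+1 :=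
  \matrix_(i, j) if elem i == p (elem j) then (-1) ^+ b (elem j) else 0.

Lemma eq_sperm_mx p p' b b' : p =1 p' -> b =1 b' -> sperm_mx p b = sperm_mx p' b'.
Proof. by move=> pp bb; apply/matrixP => i j; rewrite !mxE pp bb. Qed.

Lemma sperm_mxM p q b c :
  sperm_mx p b * sperm_mx q c = sperm_mx (p \o q) (fun t => b (q t) (+) c t).
Proof.
apply/matrixP => i j; rewrite !mxE (bigD1 (index (q (elem j)))) //= !mxE indexK eqxx.
rewrite big1 ?addr0 => [|k /negbTE kq]; first by case: eqP; rewrite ?mul0r // signr_addb.
rewrite !mxE; case: (elem k =P q (elem j)) => [ek|]; rewrite ?mulr0 //.
by rewrite -ek elemK eqxx in kq.
Qed.

Lemma sperm_mx1 : sperm_mx id (fun=> false) = 1.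
Proof. by apply/matrixP => i j; rewrite !mxE (inj_eq elem_inj); case: eqP. Qed.

Lemma sperm_mxN p b : - sperm_mx p b = sperm_mx p (fun t => ~~ b t).
Proof. by apply/matrixP => i j; rewrite !mxE signrN; case: eqP; rewrite ?oppr0. Qed.

End SignedPermutationMatrices.

Section Model.

Variables (C : fieldType) (n : nat).

Local Notation T := (mask n * mask n)%type.

Let t0 : T := ([ffun=> false], [ffun=> false]).

(* The left regular representation on the monomial basis, cf. [mulu_monomial] and
   [mulv_monomial]. *)
Definition regular_u i :=
  sperm_mx C t0 (fun t => (toggle t.1 i, t.2)) (fun t => mask_at t.1 i).

Definition regular_v i :=
  sperm_mx C t0 (fun t => (t.1, toggle t.2 i)) (fun t => nbr_odd t.1 i (+) mask_at t.2 i).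

Lemma regular_Qrel : Qrel n regular_u regular_v.
Proof.
rewrite /regular_u /regular_v; split=> [i iQ|i j iQ jQ|i j iQ jQ].
- rewrite !sperm_mxM -(sperm_mx1 C t0) sperm_mxN.
  split; apply: eq_sperm_mx => -[a b] /=; rewrite ?toggleK // mask_at_toggle // eqxx.
    by case: mask_at.
  by case: mask_at; case: nbr_odd.
- rewrite !sperm_mxM; case: ifP => adj; rewrite ?sperm_mxN; apply: eq_sperm_mx => -[a b] //=;
    rewrite nbr_odd_toggle // adjacentC /adjacent adj;
    by case: mask_at; case: nbr_odd; case: mask_at.
- rewrite !sperm_mxM; split; apply: eq_sperm_mx => -[a b] /=; try by rewrite toggleC.
    by rewrite !mask_at_toggle // (eq_sym j); case: mask_at; case: mask_at; case: (i == j).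
  rewrite !mask_at_toggle // (eq_sym j).
  by case: mask_at; case: mask_at; case: nbr_odd; case: nbr_odd; case: (i == j).
Qed.

End Model.

Lemma Qn_oner_neq0 (C : fieldType) n (A : algType C) (u v : nat -> A) :
  is_Qn n u v -> (1 : A) != 0.
Proof.
case=> _ univ; have [[h _] _] := univ _ _ _ (regular_Qrel C n).
apply/eqP => A10; have := rmorph1 h.
by rewrite A10 raddf0 => /eqP; rewrite eq_sym oner_eq0.
Qed.

Lemma Qrel_sign (R : pzRingType) n (u v : nat -> R) (e e' : nat -> bool) :
  Qrel n u v -> Qrel n (fun i => (-1) ^+ e i * u i) (fun i => (-1) ^+ e' i * v i).
Proof.
case=> sq uv uvC; split=> [i iQ|i j iQ jQ|i j iQ jQ]; rewrite !mulr_signM.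
- by have [-> ->] := sq i iQ; rewrite !addbb mul1r.
- by rewrite uv //; case: ifP; rewrite ?mulrN addbC.
- by have [-> ->] := uvC i j iQ jQ; rewrite addbC [e' i (+) _]addbC.
Qed.

Lemma rmorph_Uprod (R S : pzRingType) (f : {rmorphism R -> S}) n
    (w : nat -> R) (w' : nat -> S) :
  (forall i, inQ n i -> f (w i) = w' i) -> f (Uprod n w) = Uprod n w'.
Proof.
move=> fw; rewrite rmorph_prod; apply: congr_big_nat => // i /and3P[_ i_gt0 lt_in].
by apply: fw; rewrite /inQ i_gt0.
Qed.

Lemma Uprod_negate1 (R : pzRingType) n (w : nat -> R) : (1 < n)%N ->
  Uprod n (fun i => (-1) ^+ (i == 1)%N * w i) = - Uprod n w.
Proof.
move=> n_gt1; rewrite /Uprod (big_ltn_cond n_gt1) (big_ltn_cond n_gt1) /= mulN1r mulNr.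
by congr (- (_ * _)); apply: congr_big_nat => // i /and3P[_ i_gt1 _]; rewrite gtn_eqF ?mul1r.
Qed.

Lemma lreg_Uprod (R : pzRingType) n (w : nat -> R) :
  (forall i, inQ n i -> w i * w i = -1) -> GRing.lreg (Uprod n w).
Proof.
move=> wsq; rewrite /Uprod big_seq_cond.
apply: big_ind => [||i]; [exact: lreg1 | exact: lregM |].
rewrite mem_index_iota => /andP[iQ _]; apply: mulrI0_lreg => y wy0.
by rewrite -[y]mul1r -[1]opprK -(wsq i iQ) mulNr -mulrA wy0 mulr0 oppr0.
Qed.

Lemma fixed_antifixed_sum_eq0 (F : fieldType) (V : lmodType F) (f : {additive V -> V})
    (x y : V) :
  2%:R != 0 :> F -> f x = x -> f y = - y -> x + y = 0 -> x = 0 /\ y = 0.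
Proof.
move=> two fx fy xy0; have xy1 : x - y = 0 by rewrite -fx -fy -raddfD xy0 raddf0.
have x0 : x = 0.
  apply: (scalerI two); rewrite scaler0 scaler_nat mulr2n.
  by rewrite -[x + x]addr0 -{1}(subrr y) addrACA xy0 xy1 addr0.
by split=> //; apply/eqP; move: xy1; rewrite x0 sub0r => /eqP; rewrite oppr_eq0.
Qed.

Lemma Qn_free_1UV (C : fieldType) n (A : algType C) (u v : nat -> A) (a b c d : C) :
  2%:R != 0 :> C -> (1 < n)%N -> is_Qn n u v ->
  a%:A + b *: Uprod n u + c *: Uprod n v + d *: (Uprod n u * Uprod n v) = 0 ->
  [/\ a = 0, b = 0, c = 0 & d = 0].
Proof.
move=> two n_gt1 QA; set U := Uprod n u; set V := Uprod n v => E.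
have [Q univ] := QA.
have twist (e e' : nat -> bool) : exists f : {lrmorphism A -> A},
    forall i, inQ n i -> f (u i) = (-1) ^+ e i * u i /\ f (v i) = (-1) ^+ e' i * v i.
  by have [[f fuv] _] := univ _ _ _ (Qrel_sign e e' Q); exists f.
(* [f] negates [u 1] and [g] negates [v 1]; they act on [1, U, V, UV] by the signs
   [+, -, +, -] and [+, +, -, -]. *)
have [f fuv] := twist (fun i => i == 1)%N (fun=> false).
have [g guv] := twist (fun=> false) (fun i => i == 1)%N.
have fU : f U = - U.
  rewrite (rmorph_Uprod (w' := fun i => (-1) ^+ (i == 1)%N * u i)) ?Uprod_negate1 //.
  by move=> i /fuv[].
have fV : f V = V by rewrite (rmorph_Uprod (w' := v)) // => i /fuv[_]; rewrite mul1r.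
have gU : g U = U by rewrite (rmorph_Uprod (w' := u)) // => i /guv[]; rewrite mul1r.
have gV : g V = - V.
  rewrite (rmorph_Uprod (w' := fun i => (-1) ^+ (i == 1)%N * v i)) ?Uprod_negate1 //.
  by move=> i /guv[].
have fUV : f (U * V) = - (U * V).
  by rewrite rmorphM; change (f U * f V = - (U * V)); rewrite fU fV mulNr.
have gUV : g (U * V) = - (U * V).
  by rewrite rmorphM; change (g U * g V = - (U * V)); rewrite gU gV mulrN.
have [E1 E2] : a%:A + c *: V = 0 /\ b *: U + d *: (U * V) = 0.
  have fx : f (a%:A + c *: V) = a%:A + c *: V.
    by rewrite linearD !linearZ /= rmorph1 fV.
  have fy : f (b *: U + d *: (U * V)) = - (b *: U + d *: (U * V)).
    by rewrite linearD !linearZ /= fUV fU !scalerN opprD.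
  by apply: (fixed_antifixed_sum_eq0 two fx fy); rewrite addrA [a%:A + _ + _]addrAC E.
have [a0 c0] : a%:A = 0 :> A /\ c *: V = 0.
  have gx : g a%:A = a%:A by rewrite linearZ /= rmorph1.
  have gy : g (c *: V) = - (c *: V) by rewrite linearZ /= gV scalerN.
  exact: (fixed_antifixed_sum_eq0 (f := g) two gx gy E1).
have [b0 d0] : b *: U = 0 /\ d *: (U * V) = 0.
  have gx : g (b *: U) = b *: U by rewrite linearZ /= gU.
  have gy : g (d *: (U * V)) = - (d *: (U * V)) by rewrite linearZ /= gUV scalerN.
  exact: (fixed_antifixed_sum_eq0 (f := g) two gx gy E2).
have coef0 (k : C) (x : A) : GRing.lreg x -> k *: x = 0 -> k = 0.
  move=> x_reg; rewrite -mulr_algr -(mulr0 x) => /x_reg/eqP.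
  by rewrite scaler_eq0 (negbTE (Qn_oner_neq0 QA)) orbF => /eqP.
have [Ureg Vreg] := (lreg_Uprod (Qrel_usq Q), lreg_Uprod (Qrel_vsq Q)).
split; [exact: coef0 (@lreg1 A) a0 | exact: coef0 Ureg b0 | exact: coef0 Vreg c0
       | exact: coef0 (lregM Ureg Vreg) d0].
Qed.

Theorem mainTheorem6 (C : numClosedFieldType) (n : nat) (A : algType C)
    (u v : nat -> A) :
  (2 <= n)%N -> is_Qn n u v ->
  (~~ (3 %| n)%N ->
     forall z : A, central z <-> exists c : C, z = c%:A) /\
  ((3 %| n)%N ->
     (forall z : A, central z <->
        exists a b c d : C,
          z = a%:A + b *: Uprod n u + c *: Uprod n v
              + d *: (Uprod n u * Uprod n v)) /\
     (forall a b c d : C,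
        a%:A + b *: Uprod n u + c *: Uprod n v
          + d *: (Uprod n u * Uprod n v) = 0 ->
        [/\ a = 0, b = 0, c = 0 & d = 0])).
Proof.
move=> n_gt1 QA; have two : 2%:R != 0 :> C by rewrite pnatr_eq0.
split=> [n3 z|n3]; first split.
- exact: (central_scalar QA).
- by move=> [k ->] x; rewrite mulr_algl mulr_algr.
have [cU cV] := central_Uprod QA n3.
split=> [z|a b c d]; last exact: Qn_free_1UV.
split; first exact: (central_span_1UV QA).
move=> [a [b [c [d ->]]]] x; apply: commr_sym.
have [xU xV] := (commr_sym (cU x), commr_sym (cV x)).
by do !apply: commrD; apply: commr_scale => //; [exact: commr1 | exact: commrM].
Qed.
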